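(* $\mathsf{SquaMS}$ has no final object.
   Context: Let $M_0=\{(r,s)\in[0,1]^2: r\in\{0,1\}\text{ or } s\in\{0,1\}\}$. A square metric space is a pair $(X,S_X)$ with $X$ a metric space with all distances at most $2$ and $S_X\colon M_0\to X$ injective such that (sq1) for $i\in\{0,1\}$, $r,s\in[0,1]$: $d_X(S_X(i,r),S_X(i,s))=|s-r|$ and $d_X(S_X(r,i),S_X(s,i))=|s-r|$; (sq2) $d_X(S_X(r,s),S_X(t,u))\ge|r-t|+|s-u|$ for all $(r,s),(t,u)\in M_0$. $\mathsf{SquaMS}$ has these as objects and short maps $f\colon X\to Y$ with $f\circ S_X=S_Y$ as morphisms. *)

From Stdlib Require Import Reals.
Open Scope R_scope.

Definition inM0 (p : R * R) : Prop :=
  (0 <= fst p <= 1) /\ (0 <= snd p <= 1) /\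
  (fst p = 0 \/ fst p = 1 \/ snd p = 0 \/ snd p = 1).

Definition M0 : Type := { p : R * R | inM0 p }.

Record SquareMS : Type := {
  carrier :> Type;
  dist : carrier -> carrier -> R;
  dist_ge0 : forall x y, 0 <= dist x y;
  dist_eq0 : forall x y, dist x y = 0 <-> x = y;
  dist_sym : forall x y, dist x y = dist y x;
  dist_tri : forall x y z, dist x z <= dist x y + dist y z;
  dist_le2 : forall x y, dist x y <= 2;
  S : M0 -> carrier;
  S_inj : forall p q, S p = S q -> p = q;
  sq1_vert : forall p q : M0,
    (fst (proj1_sig p) = 0 \/ fst (proj1_sig p) = 1) ->
    fst (proj1_sig q) = fst (proj1_sig p) ->
    dist (S p) (S q) = Rabs (snd (proj1_sig q) - snd (proj1_sig p));
  sq1_horiz : forall p q : M0,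
    (snd (proj1_sig p) = 0 \/ snd (proj1_sig p) = 1) ->
    snd (proj1_sig q) = snd (proj1_sig p) ->
    dist (S p) (S q) = Rabs (fst (proj1_sig q) - fst (proj1_sig p));
  sq2 : forall p q : M0,
    dist (S p) (S q) >=
      Rabs (fst (proj1_sig p) - fst (proj1_sig q)) +
      Rabs (snd (proj1_sig p) - snd (proj1_sig q))
}.

Definition is_SquaMS_mor (X Y : SquareMS) (f : X -> Y) : Prop :=
  (forall x y : X, dist Y (f x) (f y) <= dist X x y) /\
  (forall p : M0, f (S X p) = S Y p).

Definition is_final (T : SquareMS) : Prop :=
  forall X : SquareMS, exists f : X -> T,
    is_SquaMS_mor X T f /\ forall g : X -> T, is_SquaMS_mor X T g -> g = f.

(* Adjoining to a square metric space T one extra point at distance 2 from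
   every point of T gives a new square metric space with the same boundary
   map.  If T were final, the morphism from this extension to T would be
   unique; but the identity of T extended by sending the new point to any
   point t of T is a morphism, for every t, and T has at least two points
   (the corners S(0,0) and S(1,1)). *)

From Stdlib Require Import Reals Lra.
Open Scope R_scope.

Lemma final_mor_unique {T X : SquareMS} {f g : X -> T} :
  is_final T -> is_SquaMS_mor X T f -> is_SquaMS_mor X T g -> f = g.
Proof.
  intros final_T mor_f mor_g.
  destruct (final_T X) as [h [_ unique_h]].
  rewrite (unique_h f mor_f), (unique_h g mor_g); reflexivity.
Qed.

Section AddFarPoint.
Variable T : SquareMS.

Definition far_dist (a b : option T) : R :=
  match a, b with
  | Some x, Some y => dist T x y
  | None, None => 0
  | _, _ => 2
  end.

Lemma far_dist_ge0 (a b : option T) : 0 <= far_dist a b.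
Proof. destruct a, b; simpl; try lra; apply dist_ge0. Qed.

Lemma far_dist_le2 (a b : option T) : far_dist a b <= 2.
Proof. destruct a, b; simpl; try lra; apply dist_le2. Qed.

Lemma far_dist_eq0 (a b : option T) : far_dist a b = 0 <-> a = b.
Proof.
  destruct a as [x|], b as [y|]; simpl; split; intro E;
    try lra; try discriminate; try reflexivity.
  - f_equal; apply (dist_eq0 T); exact E.
  - injection E as ->; apply (dist_eq0 T); reflexivity.
Qed.

Lemma far_dist_sym (a b : option T) : far_dist a b = far_dist b a.
Proof. destruct a, b; simpl; try reflexivity; apply dist_sym. Qed.

Lemma far_dist_tri (a b c : option T) :
  far_dist a c <= far_dist a b + far_dist b c.
Proof.
  pose proof (far_dist_ge0 a b); pose proof (far_dist_ge0 b c);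
    pose proof (far_dist_le2 a c).
  destruct a, b, c; simpl in *; try apply dist_tri; lra.
Qed.

Definition far_S (p : M0) : option T := Some (S T p).

Lemma far_S_inj (p q : M0) : far_S p = far_S q -> p = q.
Proof. intro E; injection E; apply S_inj. Qed.

Definition add_far_point : SquareMS :=
  {| carrier := option T;
     dist := far_dist;
     dist_ge0 := far_dist_ge0;
     dist_eq0 := far_dist_eq0;
     dist_sym := far_dist_sym;
     dist_tri := far_dist_tri;
     dist_le2 := far_dist_le2;
     S := far_S;
     S_inj := far_S_inj;
     sq1_vert := sq1_vert T;
     sq1_horiz := sq1_horiz T;
     sq2 := sq2 T |}.

Definition collapse_far_point (t : T) (a : add_far_point) : T :=
  match a with Some x => x | None => t end.

Lemma collapse_far_point_mor (t : T) :
  is_SquaMS_mor add_far_point T (collapse_far_point t).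
Proof.
  split; [|reflexivity].
  intros [x|] [y|]; simpl.
  - lra.
  - apply dist_le2.
  - apply dist_le2.
  - rewrite (proj2 (dist_eq0 T t t) eq_refl); lra.
Qed.

End AddFarPoint.

Definition corner00 : M0 := exist inM0 (0, 0) ltac:(unfold inM0; simpl; lra).
Definition corner11 : M0 := exist inM0 (1, 1) ltac:(unfold inM0; simpl; lra).

Lemma S_corner00_neq_corner11 (T : SquareMS) : S T corner00 <> S T corner11.
Proof.
  intro E; apply S_inj, (f_equal (fun p => fst (proj1_sig p))) in E.
  simpl in E; lra.
Qed.

Theorem mainTheorem20 : ~ exists T : SquareMS, is_final T.
Proof.
  intros [T final_T].
  apply (S_corner00_neq_corner11 T).
  pose proof (final_mor_unique final_T
                (collapse_far_point_mor T (S T corner00))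
                (collapse_far_point_mor T (S T corner11))) as same_collapse.
  exact (f_equal (fun c => c None) same_collapse).
Qed.
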